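(* Let $a,b$ be positive integers with $a\ge b$ such that either $b\ge2$, or $b=1$ and $a\ge5$, let $A=\begin{pmatrix}2&-a\\-b&2\end{pmatrix}$, and let $\Sigma$ be a linearly independent $\pi$-system in $\Delta$. Then either $|\Sigma|=1$, or there exist $w\in W$ and $j,k\in\mathbb Z_+$ such that $\Sigma_0=\{\beta_1^j,\beta_2^k\}$ is a $\pi$-system and either $w\Sigma=\Sigma_0$ or $w\Sigma=-\Sigma_0$.
   Context: Let $\mathfrak g(A)$ be the Kac–Moody algebra of $A=\begin{pmatrix}2&-a\\-b&2\end{pmatrix}$, with simple roots $\alpha_1,\alpha_2$, root system $\Delta$, real roots $\Delta_{\mathrm{re}}$ and Weyl group $W$. $\mathbb Z_+=\{0,1,2,\dots\}$. Define integers $c_j,d_j$ by $c_0=d_0=0$, $c_1=d_1=1$, $c_{k+2}+c_k=a d_{k+1}$, $d_{k+2}+d_k=b c_{k+1}$, and set $\beta_1^j=c_j\alpha_1+d_{j+1}\alpha_2$, $\beta_2^j=c_{j+1}\alpha_1+d_j\alpha_2$ ($j\in\mathbb Z_+$); these are exactly the positive real roots. A subset $\Sigma\subseteq\Delta_{\mathrm{re}}$ is a $\pi$-system if $\alpha-\beta\notin\Delta$ for all $\alpha,\beta\in\Sigma$. *)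

From HB Require Import structures.
From mathcomp Require Import all_boot all_order all_algebra.
Set Implicit Arguments. Unset Strict Implicit. Unset Printing Implicit Defensive.
Import Order.TTheory GRing.Theory Num.Theory.
Local Open Scope ring_scope.

(* Rank-2 Kac-Moody root data for A = [[2,-a],[-b,2]].
   An element m*alpha_1 + n*alpha_2 of the root lattice Q is the pair (m,n) : int*int. *)

Section KM.
Variables a b : nat.

(* simple reflections: s_i(v) = v - <v, alpha_i^vee> alpha_i,
   <m a1 + n a2, a1^vee> = 2m - a n,  <m a1 + n a2, a2^vee> = -b m + 2n.
   [true] encodes s_1, [false] encodes s_2. *)
Definition srefl (i : bool) (v : int * int) : int * int :=
  if i then (a%:Z * v.2 - v.1, v.2) else (v.1, b%:Z * v.1 - v.2).

(* An element of the Weyl group W is given by a word in s_1, s_2. *)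
Definition Wact (w : seq bool) (v : int * int) : int * int := foldr srefl v w.

Definition simple_root (i : bool) : int * int := if i then (1, 0) else (0, 1).

Definition negr (v : int * int) : int * int := (- v.1, - v.2).

Definition real_root (v : int * int) : Prop :=
  exists (w : seq bool) (i : bool), v = Wact w (simple_root i).

(* Kac's fundamental set K: alpha in Q_+ \ {0} with connected support and
   <alpha, alpha_i^vee> <= 0 for i = 1,2 *)
Definition Kset (v : int * int) : Prop :=
  0 < v.1 /\ 0 < v.2 /\ 2 * v.1 - a%:Z * v.2 <= 0 /\ 2 * v.2 - b%:Z * v.1 <= 0.

(* imaginary roots: Delta_im = W K  union  - W K  (Kac, Thm 5.4) *)
Definition imag_root (v : int * int) : Prop :=
  exists (w : seq bool) (k : int * int),
    Kset k /\ (v = Wact w k \/ v = negr (Wact w k)).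

Definition root (v : int * int) : Prop := real_root v \/ imag_root v.

Definition pi_system (s : seq (int * int)) : Prop :=
  (forall x, x \in s -> real_root x) /\
  (forall x y, x \in s -> y \in s -> ~ root (x.1 - y.1, x.2 - y.2)).

(* the integers c_j, d_j: cd n = (c_n, d_n, c_{n+1}, d_{n+1}) *)
Fixpoint cd (n : nat) : int * int * int * int :=
  match n with
  | 0%N => (0, 0, 1, 1)
  | n'.+1 => let: (c, d, c', d') := cd n' in (c', d', a%:Z * d' - c, b%:Z * c' - d)
  end.

Definition cseq (n : nat) : int := (cd n).1.1.1.
Definition dseq (n : nat) : int := (cd n).1.1.2.

Definition beta1 (j : nat) : int * int := (cseq j, dseq j.+1).
Definition beta2 (j : nat) : int * int := (cseq j.+1, dseq j).

End KM.

Definition tovec (v : int * int) : 'rV[rat]_2 :=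
  \row_(i < 2) (if i == ord0 then v.1%:~R else v.2%:~R).

Definition lin_indep (s : seq (int * int)) : bool := free (map tovec s).

From Pilot Require Import Defs.
From mathcomp Require Import all_boot all_order all_algebra.
From mathcomp Require Import zify ring.
Set Implicit Arguments. Unset Strict Implicit. Unset Printing Implicit Defensive.
Import Order.TTheory GRing.Theory Num.Theory.
Local Open Scope ring_scope.

(* Up to sign, the real roots form a single chain gamma n (n : int), with
   gamma n = beta2 n for n >= 0 and gamma (-1 - k) = - beta1 k; s1 and s2 act on it
   (again up to sign) by n |-> -n and n |-> -2 - n, so s1 s2 translates it by 2.
   A linearly independent pi-system has at most two elements, +-gamma n and +-gamma m
   with n < m.  If the signs agree, a translation moves gamma n - gamma m to
   -(gamma g - gamma 0) or -(gamma g - gamma (-1)).  Under the hypotheses on a and b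
   the invariant quadratic form is <= 0 on these positive vectors (apart from two real
   roots when b = 1), and reflecting such a vector down into Kac's fundamental set
   shows that it is an imaginary root, contradicting the pi-system property.  Hence the
   signs differ, and a translation, followed by s1 when n is even, maps the pair onto
   -{beta1 j, beta2 k}. *)

Lemma int_even_or_odd (n : int) : exists t, n = 2 * t \/ n = 2 * t + 1.
Proof. by exists (n %/ 2)%Z; lia. Qed.

Section RankTwoRoots.
Variables a b : nat.

Local Notation srefl := (srefl a b).
Local Notation Wact := (Wact a b).
Local Notation real_root := (real_root a b).
Local Notation imag_root := (imag_root a b).
Local Notation root := (Defs.root a b).

Lemma srefl_add i u v : srefl i (u + v) = srefl i u + srefl i v.
Proof. by apply: injective_projections; case: i => /=; ring. Qed.

Lemma srefl_opp i v : srefl i (- v) = - srefl i v.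
Proof. by apply: injective_projections; case: i => /=; ring. Qed.

Lemma sreflK i : involutive (srefl i).
Proof. by move=> v; apply: injective_projections; case: i => /=; ring. Qed.

Lemma srefl_simple i : srefl i (simple_root i) = - simple_root i.
Proof. by apply: injective_projections; case: i => /=; ring. Qed.

Lemma Wact_nil v : Wact [::] v = v.
Proof. by []. Qed.

Lemma Wact_cons i w v : Wact (i :: w) v = srefl i (Wact w v).
Proof. by []. Qed.

Lemma Wact_cat w1 w2 v : Wact (w1 ++ w2) v = Wact w1 (Wact w2 v).
Proof. exact: foldr_cat. Qed.

Lemma Wact_opp w v : Wact w (- v) = - Wact w v.
Proof. by elim: w => //= i w ->; rewrite srefl_opp. Qed.

Lemma Wact_sub w u v : Wact w (u - v) = Wact w u - Wact w v.
Proof. by elim: w => //= i w ->; rewrite srefl_add srefl_opp. Qed.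

Lemma Wact_revK w : cancel (Wact w) (Wact (rev w)).
Proof.
elim: w => //= i w IHw v.
by rewrite rev_cons -cats1 Wact_cat /= sreflK IHw.
Qed.

Lemma real_root_Wact w v : real_root v -> real_root (Wact w v).
Proof. by case=> w' [i ->]; exists (w ++ w'), i; rewrite Wact_cat. Qed.

Lemma real_root_opp v : real_root v -> real_root (- v).
Proof.
case=> w [i ->]; exists (w ++ [:: i]), i.
by rewrite Wact_cat /= srefl_simple Wact_opp.
Qed.

Lemma imag_root_Wact w v : imag_root v -> imag_root (Wact w v).
Proof.
case=> w' [k [Kk Ev]]; exists (w ++ w'), k; split=> //.
by rewrite !Wact_cat; case: Ev => ->; [left | right; rewrite Wact_opp].
Qed.

Lemma imag_root_opp v : imag_root v -> imag_root (- v).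
Proof.
case=> w [k [Kk Ev]]; exists w, k; split=> //.
by case: Ev => ->; [right | left; rewrite opprK].
Qed.

Lemma root_Wact w v : root v -> root (Wact w v).
Proof. by case=> [/(real_root_Wact w) | /(imag_root_Wact w)]; [left | right]. Qed.

Lemma root_Wact_inv w v : root (Wact w v) -> root v.
Proof. by move/(root_Wact (rev w)); rewrite Wact_revK. Qed.

Lemma root_opp v : root v -> root (- v).
Proof. by case=> [/real_root_opp | /imag_root_opp]; [left | right]. Qed.

Lemma cd_step n : cd a b n.+1 =
  ((cd a b n).1.2, (cd a b n).2, a%:Z * (cd a b n).2 - (cd a b n).1.1.1,
   b%:Z * (cd a b n).1.2 - (cd a b n).1.1.2).
Proof. by rewrite /=; case: (cd a b n) => [[[c d] c'] d']. Qed.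

Lemma cseq_rec n : cseq a b n.+2 = a%:Z * dseq a b n.+1 - cseq a b n.
Proof. by rewrite /cseq /dseq !cd_step. Qed.

Lemma dseq_rec n : dseq a b n.+2 = b%:Z * cseq a b n.+1 - dseq a b n.
Proof. by rewrite /cseq /dseq !cd_step. Qed.

Definition gamma (n : int) : int * int :=
  match n with Posz k => beta2 a b k | Negz k => - beta1 a b k end.

Lemma gamma0 : gamma 0 = (1, 0).
Proof. by []. Qed.

Lemma gammaN1 : gamma (-1) = (0, -1).
Proof. by []. Qed.

Lemma gamma_srefl1 n : srefl true (gamma n) = - gamma (- n).
Proof.
apply: injective_projections; case: n => [[|k]|k] /=;
  rewrite /beta1 /beta2 ?cseq_rec /= /dseq /cseq /=; ring.
Qed.

Lemma gamma_srefl2 n : srefl false (gamma n) = - gamma (-2 - n).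
Proof.
case: n => [k|[|k]].
- have -> : -2 - Posz k = Negz k.+1 by rewrite NegzE; lia.
  by apply: injective_projections; rewrite /= /beta1 /beta2 ?dseq_rec /=; ring.
- by apply: injective_projections; rewrite /= /dseq /cseq /=; ring.
have -> : -2 - Negz k.+1 = Posz k by rewrite NegzE; lia.
by apply: injective_projections; rewrite /= /beta1 /beta2 ?dseq_rec /=; ring.
Qed.

Definition translation (t : int) : seq bool :=
  match t with
  | Posz k => flatten (nseq k [:: true; false])
  | Negz k => flatten (nseq k.+1 [:: false; true])
  end.

Lemma gamma_translation t n : Wact (translation t) (gamma n) = gamma (n + 2 * t).
Proof.
have iter_shift s d : (forall m, Wact s (gamma m) = gamma (m + d)) ->
    forall k m, Wact (flatten (nseq k s)) (gamma m) = gamma (m + d *+ k).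
  move=> shift; elim=> [|k IHk] m; first by rewrite addr0.
  by rewrite /= Wact_cat IHk shift mulrSr addrA.
have s12 m : Wact [:: true; false] (gamma m) = gamma (m + 2).
  by rewrite !Wact_cons Wact_nil gamma_srefl2 srefl_opp gamma_srefl1 opprK opprB addrC.
have s21 m : Wact [:: false; true] (gamma m) = gamma (m - 2).
  by rewrite !Wact_cons Wact_nil gamma_srefl1 srefl_opp gamma_srefl2 opprK opprK addrC.
by case: t => k; rewrite /translation (iter_shift _ _ s12, iter_shift _ _ s21);
  congr gamma; rewrite ?NegzE; lia.
Qed.

Lemma real_root_gamma v : real_root v -> exists n, v = gamma n \/ v = - gamma n.
Proof.
case=> w [i ->]; elim: w => [|j w [n [En | En]]]; rewrite ?Wact_cons ?En.
- by case: i; [exists 0; left | exists (-1); right].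
- by case: j; rewrite ?gamma_srefl1 ?gamma_srefl2; eexists; right.
- by case: j; rewrite srefl_opp ?gamma_srefl1 ?gamma_srefl2 opprK; eexists; left.
Qed.

(* Half the W-invariant form with (alpha1, alpha1) = 2b, (alpha2, alpha2) = 2a and
   (alpha1, alpha2) = -ab. *)
Definition qform (v : int * int) : int :=
  b%:Z * v.1 ^+ 2 - a%:Z * b%:Z * v.1 * v.2 + a%:Z * v.2 ^+ 2.

Lemma qform_srefl i v : qform (srefl i v) = qform v.
Proof. by case: i; rewrite /qform /=; ring. Qed.

Lemma qform_Wact w v : qform (Wact w v) = qform v.
Proof. by elim: w => //= i w IHw; rewrite qform_srefl. Qed.

Lemma qform_sub_gamma0 v :
  qform (v - gamma 0) = qform v + b%:Z * (1 - (2 * v.1 - a%:Z * v.2)).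
Proof. by rewrite gamma0 /qform /=; ring. Qed.

Lemma qform_sub_gammaN1 v :
  qform (v - gamma (-1)) = qform v + a%:Z * (1 + (2 * v.2 - b%:Z * v.1)).
Proof. by rewrite gammaN1 /qform /=; ring. Qed.

Fixpoint ef (i : nat) : int * int :=
  if i is i'.+1 then
    ((ef i').2 - (ef i').1, a%:Z * b%:Z * ((ef i').2 - (ef i').1) - (ef i').2)
  else (0, 1).

Lemma cd_double i : cd a b i.*2 = (a%:Z * (ef i).1, b%:Z * (ef i).1, (ef i).2, (ef i).2).
Proof.
elim: i => [|i IHi]; first by rewrite /= !mulr0.
by rewrite doubleS !cd_step IHi /=; congr (_, _, _, _); ring.
Qed.

Lemma cd_double_succ i : cd a b i.*2.+1 =
  ((ef i).2, (ef i).2, a%:Z * ((ef i).2 - (ef i).1), b%:Z * ((ef i).2 - (ef i).1)).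
Proof. by rewrite cd_step cd_double /=; congr (_, _, _, _); ring. Qed.

Lemma gamma_double i : gamma i.*2 = ((ef i).2, b%:Z * (ef i).1).
Proof. by rewrite /= /beta2 /cseq /dseq cd_double_succ cd_double. Qed.

Lemma gamma_double_succ i : gamma i.*2.+1 = (a%:Z * ((ef i).2 - (ef i).1), (ef i).2).
Proof. by rewrite /= /beta2 /cseq /dseq -doubleS cd_double cd_double_succ. Qed.

Lemma qform_gamma_double i : qform (gamma i.*2) = b%:Z.
Proof.
rewrite (_ : Posz i.*2 = 0 + 2 * i%:Z); last by lia.
by rewrite -gamma_translation qform_Wact gamma0 /qform /=; ring.
Qed.

Lemma qform_gamma_double_succ i : qform (gamma i.*2.+1) = a%:Z.
Proof.
rewrite (_ : Posz i.*2.+1 = -1 + 2 * (i%:Z + 1)); last by lia.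
by rewrite -gamma_translation qform_Wact gammaN1 /qform /=; ring.
Qed.

Lemma ef_bounds (m_ge4 : 4 <= a%:Z * b%:Z) i :
  [/\ 0 <= (ef i).1, 2 * (ef i).1 + 1 <= (ef i).2
    & 2 <= 2 * (ef i).2 - a%:Z * b%:Z * (ef i).1].
Proof.
elim: i => [|i [e_ge0 gap_ge1 IHi]]; first by rewrite /= mulr0; split; lia.
move: e_ge0 gap_ge1 IHi => /=; set e := (ef i).1; set f := (ef i).2.
set m := a%:Z * b%:Z => e_ge0 gap_ge1 _.
have : 0 <= (m - 4) * (f - e) by apply: mulr_ge0; lia.
split; nia.
Qed.

Lemma gamma_opp_pair (n m : int) : n < m -> exists w j k,
  [:: Wact w (gamma n); Wact w (- gamma m)] =i [:: - beta1 a b j; - beta2 a b k].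
Proof.
move=> lt_nm; have [t [n_even | n_odd]] := int_even_or_odd n.
- have [g m_eq] : exists g : nat, m = 2 * t + g.+1%:Z by exists (absz (m - 2 * t)%R).-1; lia.
  exists (true :: translation (- t)), g, 0%N.
  rewrite !Wact_cons Wact_opp !gamma_translation srefl_opp !gamma_srefl1 opprK.
  have -> : - (n + 2 * - t) = 0 by lia.
  have -> : - (m + 2 * - t) = Negz g by rewrite NegzE; lia.
  by move=> z; rewrite !inE orbC.
have [g m_eq] : exists g : nat, m = 2 * t + 1 + g.+1%:Z.
  by exists (absz (m - 2 * t - 1)%R).-1; lia.
exists (translation (- t - 1)), 0%N, g.
rewrite Wact_opp !gamma_translation.
have -> : n + 2 * (- t - 1) = -1 by lia.
by have -> : m + 2 * (- t - 1) = g by lia.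
Qed.

Definition conj_beta_pair (x y : int * int) : Prop :=
  exists w j k, [:: Wact w x; Wact w y] =i [:: beta1 a b j; beta2 a b k] \/
                [:: Wact w x; Wact w y] =i [:: - beta1 a b j; - beta2 a b k].

Lemma conj_beta_pairC x y : conj_beta_pair x y -> conj_beta_pair y x.
Proof.
case=> w [j [k E]]; exists w, j, k.
by case: E => E; [left | right] => z; rewrite -E !inE orbC.
Qed.

Lemma conj_beta_pairN x y : conj_beta_pair x y -> conj_beta_pair (- x) (- y).
Proof.
case=> w [j [k E]]; exists w, j, k; rewrite !Wact_opp.
by case: E => E; [right | left] => z; move: (E (- z)); rewrite !inE !eqr_oppLR ?opprK.
Qed.

Section LargeEntries.
Hypothesis b_le_a : (b <= a)%N.
Hypothesis ab_large : (2 <= b)%N \/ (b = 1%N /\ (5 <= a)%N).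

Lemma a_ge2 : (2 <= a)%N.
Proof. by case: ab_large => [|[]]; lia. Qed.

Lemma ab_ge4 : 4 <= a%:Z * b%:Z.
Proof. have := a_ge2; case: ab_large => [|[]]; nia. Qed.

Lemma ef_gap_ge_sum i : (2 <= b)%N \/ (0 < i)%N ->
  a%:Z + b%:Z <= a%:Z * b%:Z * ((ef i).2 - 2 * (ef i).1).
Proof.
have a2 := a_ge2; have m4 := ab_ge4.
case: ab_large => [b2 _ | [b1 a5]]; first by case: (ef_bounds m4 i); nia.
rewrite b1 => -[//|]; case: i => // i _ /=.
case: (ef_bounds m4 i); rewrite b1 mulr1.
set e := (ef i).1; set f := (ef i).2 => e_ge0 gap_ge1 _.
have gap_large : a%:Z - 3 <= a%:Z * (f - e) - f - 2 * (f - e).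
  have : 0 <= (a%:Z - 4) * (f - e - 1) by apply: mulr_ge0; lia.
  nia.
have : a%:Z * (a%:Z - 3) <= a%:Z * (a%:Z * (f - e) - f - 2 * (f - e)).
  by rewrite ler_pM2l //; lia.
nia.
Qed.

(* qform (x, y) = b x (x - a y) + a y^2, so 2x > a y forces 0 < a y - x < x. *)
Lemma qform_descent_step (x y : int) : 0 < x -> 0 < y -> qform (x, y) <= 0 ->
  Kset a b (x, y) \/ exists i, [/\ 0 < (srefl i (x, y)).1, 0 < (srefl i (x, y)).2
                                 & (srefl i (x, y)).1 + (srefl i (x, y)).2 < x + y].
Proof.
rewrite /qform /= => x_gt0 y_gt0 q_le0.
case: (lerP (2 * x - a%:Z * y) 0) => [Kx | Nx]; last first.
  by right; exists true; split => /=; nia.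
case: (lerP (2 * y - b%:Z * x) 0) => [Ky | Ny]; first by left.
by right; exists false; split => /=; nia.
Qed.

Lemma imag_root_of_qform (v : int * int) :
  0 < v.1 -> 0 < v.2 -> qform v <= 0 -> imag_root v.
Proof.
case: v => x y /=; have [h] : exists h : nat, x + y <= h%:Z by exists (absz (x + y)); lia.
elim: h x y => [|h IHh] x y le_h x_gt0 y_gt0 q_le0; first by lia.
have [Kxy | [i [w1_gt0 w2_gt0 lt_w]]] := qform_descent_step x_gt0 y_gt0 q_le0.
  by exists [::], (x, y); split; [|left].
rewrite -(sreflK i (x, y)); rewrite -(qform_srefl i) in q_le0.
move: q_le0 w1_gt0 w2_gt0 lt_w; case: (srefl i (x, y)) => x' y' /= q_le0 x'_gt0 y'_gt0 lt_xy.
have le_h' : x' + y' <= h%:Z by lia.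
exact: (imag_root_Wact [:: i] (IHh x' y' le_h' x'_gt0 y'_gt0 q_le0)).
Qed.

(* With (e, f) = ef i, qform (gamma 2i - gamma 0) = b (2 - (2f - ab e)) and
   qform (gamma (2i+1) - gamma 0) = a + b - ab (f - 2e). *)
Lemma root_gamma_sub_gamma0 g : (0 < g)%N -> root (gamma g - gamma 0).
Proof.
have [a2 m4] := (a_ge2, ab_ge4).
rewrite -[g]odd_double_half; move: g./2 (odd g) => i [].
- rewrite add1n => _.
  have [[b1 i0] | large] : (b = 1 /\ i = 0)%N \/ (2 <= b)%N \/ (0 < i)%N.
    by case: ab_large; lia.
  left; exists [:: true; false], true; rewrite i0 gamma_double_succ gamma0.
  by apply: injective_projections; rewrite /= b1; ring.
  have := ef_gap_ge_sum large; case: (ef_bounds m4 i) => e_ge0 gap_ge1 _ sum_le.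
  right; apply: imag_root_of_qform;
    rewrite ?qform_sub_gamma0 ?qform_gamma_double_succ gamma_double_succ ?gamma0 /=; nia.
rewrite add0n double_gt0 => i_gt0.
have e_gt0 : 0 < (ef i).1.
  by case: i i_gt0 => // j _ /=; case: (ef_bounds m4 j); lia.
case: (ef_bounds m4 i) => e_ge0 gap_ge1 pair_ge2.
right; apply: imag_root_of_qform;
  rewrite ?qform_sub_gamma0 ?qform_gamma_double gamma_double ?gamma0 /=; nia.
Qed.

(* With (e, f) = ef i and (e', f') = ef i.+1, qform (gamma 2i - gamma (-1)) =
   a + b - ab (f - 2e) and qform (gamma (2i+1) - gamma (-1)) = a (2 - (2f' - ab e')). *)
Lemma root_gamma_sub_gammaN1 (g : nat) : root (gamma g - gamma (-1)).
Proof.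
have [a2 m4] := (a_ge2, ab_ge4).
rewrite -[g]odd_double_half; move: g./2 (odd g) => i [].
- rewrite add1n; case: (ef_bounds m4 i) => e_ge0 gap_ge1 _.
  have [_ _ pair_ge2] := ef_bounds m4 i.+1; rewrite /= in pair_ge2.
  right; apply: imag_root_of_qform;
    rewrite ?qform_sub_gammaN1 ?qform_gamma_double_succ gamma_double_succ ?gammaN1 /=;
    nia.
rewrite add0n.
have [[b1 i0] | large] : (b = 1 /\ i = 0)%N \/ (2 <= b)%N \/ (0 < i)%N.
  by case: ab_large; lia.
  left; exists [:: false], true; rewrite i0 gamma_double gammaN1.
  by apply: injective_projections; rewrite /= ?b1; ring.
have := ef_gap_ge_sum large; case: (ef_bounds m4 i) => e_ge0 gap_ge1 _ sum_le.
right; apply: imag_root_of_qform;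
  rewrite ?qform_sub_gammaN1 ?qform_gamma_double gamma_double ?gammaN1 /=; nia.
Qed.

Lemma root_gamma_sub (n m : int) : n < m -> root (gamma n - gamma m).
Proof.
move=> lt_nm; have [t [n_even | n_odd]] := int_even_or_odd n.
- apply: (@root_Wact_inv (translation (- t))).
  rewrite Wact_sub !gamma_translation (_ : n + 2 * - t = 0); last by lia.
  have [g m_eq] : exists g : nat, m + 2 * - t = g by exists (absz (m - 2 * t)%R); lia.
  by rewrite m_eq -opprB; apply/root_opp/root_gamma_sub_gamma0; lia.
apply: (@root_Wact_inv (translation (- t - 1))).
rewrite Wact_sub !gamma_translation (_ : n + 2 * (- t - 1) = -1); last by lia.
have [g ->] : exists g : nat, m + 2 * (- t - 1) = g by exists (absz (m - 2 * t - 2)%R); lia.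
by rewrite -opprB; apply/root_opp/root_gamma_sub_gammaN1.
Qed.

Lemma conj_beta_pair_of_pi x y : real_root x -> real_root y ->
  x <> y -> x <> - y -> ~ root (x - y) -> conj_beta_pair x y.
Proof.
move=> /real_root_gamma [n Ex] /real_root_gamma [m Ey].
wlog lt_nm : x y n m Ex Ey / n < m.
  move=> gen; case: (ltgtP n m) => [lt_nm | lt_mn | eq_nm]; first exact: gen Ex Ey lt_nm.
    move=> neq_xy nopp_xy no_root; apply/conj_beta_pairC/(gen y x m n) => //.
    - by move/esym.
    - by move=> yE; apply: nopp_xy; rewrite yE opprK.
    - by rewrite -opprB => /root_opp; rewrite opprK.
  by rewrite eq_nm in Ex; case: Ex Ey => -> [] ->; rewrite ?opprK.
move=> neq_xy nopp_xy no_root.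
have [w [j [k E]]] := gamma_opp_pair lt_nm.
case: Ex Ey no_root => -> [] -> no_root.
- by case: no_root; apply: root_gamma_sub.
- by exists w, j, k; right.
- by rewrite -[gamma m]opprK; apply: conj_beta_pairN; exists w, j, k; right.
by case: no_root; rewrite opprK addrC -opprB; apply/root_opp/root_gamma_sub.
Qed.

End LargeEntries.
End RankTwoRoots.

Section PiSystems.
Variables a b : nat.

Lemma pi_system_Wact w S : pi_system a b S -> pi_system a b (map (Wact a b w) S).
Proof.
case=> reS diffS; split=> [_ /mapP [x xS ->] | _ _ /mapP [x xS ->] /mapP [y yS ->]].
  exact/real_root_Wact/reS.
by rewrite -[(_, _)]/(Wact a b w x - Wact a b w y) -Wact_sub => /root_Wact_inv; apply: diffS.
Qed.

Lemma pi_system_opp S : pi_system a b S -> pi_system a b (map -%R S).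
Proof.
case=> reS diffS; split=> [_ /mapP [x xS ->] | _ _ /mapP [x xS ->] /mapP [y yS ->]].
  exact/real_root_opp/reS.
by rewrite -[(_, _)]/(- x - - y) opprK addrC -opprB => /root_opp; rewrite opprK; apply: diffS.
Qed.

Lemma pi_system_eq_mem S T : S =i T -> pi_system a b S -> pi_system a b T.
Proof.
by move=> eqST [reS diffS]; split=> [x | x y]; rewrite -!eqST; [apply: reS | apply: diffS].
Qed.

Lemma pi_system_conj w S T : pi_system a b S ->
  map (Wact a b w) S =i T \/ map (Wact a b w) S =i map -%R T -> pi_system a b T.
Proof.
move=> /(pi_system_Wact w) piWS [eqT | eqT]; first exact: pi_system_eq_mem piWS.
by rewrite -(mapK opprK T); apply/pi_system_opp/(pi_system_eq_mem eqT).
Qed.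

End PiSystems.

Lemma free_size_le_dim (K : fieldType) (vT : vectType K) (X : seq vT) :
  free X -> (size X <= \dim {: vT})%N.
Proof. by move/eqnP <-; apply/dimvS/subvf. Qed.

Lemma lin_indep_size S : lin_indep S -> (size S <= 2)%N.
Proof. by move/free_size_le_dim; rewrite size_map dimvf. Qed.

Lemma tovec_opp v : tovec (- v) = - tovec v.
Proof. by apply/rowP => i; rewrite !mxE; case: ifP; rewrite /= intrN. Qed.

Lemma lin_indep_pair x y : lin_indep [:: x; y] -> x <> y /\ x <> - y.
Proof.
rewrite /lin_indep /= free_cons => /andP [x_notin _].
by split=> E; move: x_notin; rewrite E ?tovec_opp ?memvN memv_span ?mem_head.
Qed.

Theorem corollary3p2 (a b : nat) (Sigma : seq (int * int)) :
  (0 < b)%N -> (b <= a)%N -> ((2 <= b)%N \/ (b = 1%N /\ (5 <= a)%N)) ->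
  Sigma <> [::] ->
  pi_system a b Sigma -> lin_indep Sigma ->
  size Sigma = 1%N \/
  exists (w : seq bool) (j k : nat),
    pi_system a b [:: beta1 a b j; beta2 a b k] /\
    (map (Wact a b w) Sigma =i [:: beta1 a b j; beta2 a b k] \/
     map (Wact a b w) Sigma =i map negr [:: beta1 a b j; beta2 a b k]).
Proof.
move=> _ b_le_a ab_large Sigma_nz piS indepS.
case: Sigma Sigma_nz piS indepS => [//|x [|y [|z S]]] _ piS indepS; first by left.
  right; have [neq_xy nopp_xy] := lin_indep_pair indepS.
  have [x_in y_in] : x \in [:: x; y] /\ y \in [:: x; y] by rewrite !inE !eqxx ?orbT.
  have [w [j [k E]]] := conj_beta_pair_of_pi b_le_a ab_large
    (piS.1 x x_in) (piS.1 y y_in) neq_xy nopp_xy (piS.2 x y x_in y_in).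
  by exists w, j, k; split=> //; apply: pi_system_conj piS E.
by have := lin_indep_size indepS.
Qed.
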